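(* Let $q$ be an odd prime power, let $n,k$ be positive integers, and let $a,b,\delta\in\mathbb{F}_{q^n}$ with $ab\neq0$. Then $$f(x)=(ax^{q^k}-bx+\delta)^{\frac{q^n+1}{2}}+ax^{q^k}+bx$$ is a permutation polynomial of $\mathbb{F}_{q^n}$ if and only if $ab\in D_0$.
   Context: Let $\alpha$ be a primitive element of $\mathbb{F}_{q^n}$; $D_0=\langle\alpha^2\rangle$ is the multiplicative subgroup generated by $\alpha^2$, i.e. the set of nonzero squares in $\mathbb{F}_{q^n}$. A permutation polynomial of $\mathbb{F}_{q^n}$ is one inducing a bijection of $\mathbb{F}_{q^n}$. *)

From HB Require Import structures.
From mathcomp Require Import all_boot all_order all_algebra all_field.
Set Implicit Arguments. Unset Strict Implicit. Unset Printing Implicit Defensive.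
Import GRing.Theory.
Local Open Scope ring_scope.

Definition prime_power (q : nat) : Prop :=
  exists p m : nat, [/\ prime p, (0 < m)%N & q = (p ^ m)%N].

(* D_0 : the set of nonzero squares of the finite field F (= <alpha^2>) *)
Definition D0 (F : finFieldType) : {set F} :=
  [set x : F | [exists y : F, (y != 0) && (x == y ^+ 2)]].

Definition fpoly (F : finFieldType) (q n k : nat) (a b delta : F) (x : F) : F :=
  (a * x ^+ (q ^ k) - b * x + delta) ^+ ((q ^ n + 1) %/ 2) + a * x ^+ (q ^ k) + b * x.

Definition is_perm_fun (F : finFieldType) (f : F -> F) : Prop := bijective f.

From HB Require Import structures.
From mathcomp Require Import all_boot all_order all_algebra all_field all_solvable ring.
Import GRing.Theory.
Set Implicit Arguments. Unset Strict Implicit.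
Local Open Scope ring_scope.

(* With h = (|F| - 1)/2, the map u |-> u^h is the quadratic character of F, so for
   L(x) = a x^N - b x + delta (N = q^k) we have L^(h+1) = L or -L.  Hence f(x) = 2 a x^N + delta
   where L(x) is zero or a square, and f(x) = 2 b x - delta where L(x) is a nonsquare; both
   branches are injective because x |-> x^N is an injective additive map.  A collision f(x) = f(y)
   across the branches forces a x^N - b y + delta = 0, so L(x) = b (y - x), L(y) = a (y - x)^N and
   L(x) L(y) = a b (y - x)^(N+1) shows that a b is a nonsquare.  Conversely, if a b is a nonsquare
   then x |-> a x^N - b x has trivial kernel, so some x has L(x) = b^2; then L(x + b) = a b^N is a
   nonsquare and f(x) = f(x + b). *)

Lemma expf_card_pred (F : finFieldType) (c : F) : c != 0 -> c ^+ #|F|.-1 = 1.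
Proof.
move=> c0; apply: (mulfI c0); rewrite mulr1 -exprS prednK ?expf_card //.
by apply/card_gt0P; exists 0.
Qed.

Section OddFiniteField.

Variable F : finFieldType.
Hypothesis oddF : odd #|F|.
Local Notation h := #|F|./2.

Lemma card_odd_half : #|F| = h.*2.+1.
Proof. by rewrite -[LHS]odd_double_half oddF. Qed.

Lemma half_card_gt0 : (0 < h)%N.
Proof. by have := finNzRing_gt1 F; rewrite card_odd_half; case: (h). Qed.

Lemma two_neq0 : (2 : F) != 0.
Proof.
rewrite natf_neq0_pchar; apply/pnatP => // p pp.
rewrite dvdn_prime2 // => /eqP ->; apply/negP => pchar2.
have /p_natP[k cardF] := abelem_pgroup (fin_ring_pchar_abelem pchar2).
move: oddF (finNzRing_gt1 F); rewrite -cardsT cardF oddX /=.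
by case: k {cardF} => [|k]; rewrite ?expn0.
Qed.

Lemma oner_neqN1 : (1 : F) != -1.
Proof. by apply: contra two_neq0 => /eqP e; rewrite -[2]/(1 + 1) {1}e addNr. Qed.

Lemma expr_half_card_sqr (y : F) : y != 0 -> (y ^+ 2) ^+ h = 1.
Proof.
by move=> y0; rewrite -exprM mul2n -[h.*2]/(h.*2.+1.-1) -card_odd_half expf_card_pred.
Qed.

Lemma expr_half_card_D0 (c : F) : c \in D0 F -> c ^+ h = 1.
Proof. by rewrite inE => /existsP[y /andP[y0 /eqP->]]; apply: expr_half_card_sqr. Qed.

Lemma expr_half_card_sign (u : F) : u != 0 -> u ^+ h = 1 \/ u ^+ h = -1.
Proof.
move=> u0; have /eqP := expr_half_card_sqr u0; rewrite -!exprM mulnC exprM sqrf_eq1.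
by case/orP=> /eqP; [left | right].
Qed.

Lemma expr_half_card_notD0 (c : F) : c != 0 -> c \notin D0 F -> c ^+ h = -1.
Proof.
move=> c0 cD0.
have cardF1 : #|F|.-1 = h.*2 by rewrite {1}card_odd_half.
have : has (#|F|.-1).-primitive_root (enum (predC1 (0 : F))).
  apply: has_prim_root; rewrite ?enum_uniq -?cardE ?cardC1 //.
  - by rewrite cardF1 double_gt0 half_card_gt0.
  - by apply/allP=> x; rewrite mem_enum inE => x0; apply/unity_rootP/expf_card_pred.
move=> /hasP[g _ gprim].
have g0 : g != 0.
  apply/eqP => g0; have /eqP := prim_expr_order gprim.
  by rewrite g0 expr0n cardF1 double_eq0 eqn0Ngt half_card_gt0 eq_sym oner_eq0.
have [[i /= _] gi] := prim_rootP gprim (expf_card_pred c0).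
have [ch1|//] := expr_half_card_sign c0.
have : (#|F|.-1 %| i * h)%N by rewrite (prim_order_dvd gprim) exprM -gi ch1.
rewrite cardF1 -mul2n dvdn_pmul2r ?half_card_gt0 // => /dvdnP[j ij].
case/negP: cD0; rewrite inE; apply/existsP; exists (g ^+ j).
by rewrite expf_neq0 //= gi ij -exprM mulnC.
Qed.

End OddFiniteField.

Section PermutationCriterion.

Variables (F : finFieldType) (N : nat) (a b delta : F).
Hypotheses (oddF : odd #|F|) (pcharN : [pchar F].-nat N) (oddN : odd N).
Hypotheses (a0 : a != 0) (b0 : b != 0).
Local Notation h := #|F|./2.

Definition linear_part (x : F) := a * x ^+ N - b * x.
Definition inner_poly (x : F) := linear_part x + delta.
Definition fpolyN (x : F) := inner_poly x ^+ h.+1 + a * x ^+ N + b * x.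

Lemma exprN_sub (x y : F) : (x - y) ^+ N = x ^+ N - y ^+ N.
Proof. by rewrite exprDn_pchar // exprNn_pchar. Qed.

Lemma exprN_inj : injective (fun x : F => x ^+ N).
Proof.
move=> x y /= /eqP; rewrite -subr_eq0 -exprN_sub expf_eq0 subr_eq0.
by case/andP=> _ /eqP.
Qed.

Lemma exprN_odd (z : F) : z ^+ N = z * (z ^+ N./2) ^+ 2.
Proof. by rewrite -exprM muln2 -exprS -[N in LHS]odd_double_half oddN. Qed.

Lemma fpolyN_branch (x : F) :
  fpolyN x = if inner_poly x ^+ h == -1 then 2 * b * x - delta else 2 * a * x ^+ N + delta.
Proof.
rewrite /fpolyN exprS; case: ifP => [/eqP -> | chi].
  by rewrite /inner_poly /linear_part; ring.
suff -> : inner_poly x * inner_poly x ^+ h = inner_poly x.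
  by rewrite /inner_poly /linear_part; ring.
have [->|u0] := eqVneq (inner_poly x) 0; first by rewrite mul0r.
by have [->|chiN] := expr_half_card_sign oddF u0; [rewrite mulr1 | rewrite chiN eqxx in chi].
Qed.

Lemma fpolyN_mixed_collision (x y : F) :
  inner_poly x ^+ h != -1 -> inner_poly y ^+ h = -1 -> fpolyN x = fpolyN y -> (a * b) ^+ h = -1.
Proof.
move=> chix chiy; rewrite !fpolyN_branch chiy eqxx (negbTE chix) => /eqP fxy.
have root_xy : a * x ^+ N - b * y + delta = 0.
  have : 2 * (a * x ^+ N - b * y + delta) = 0.
    by rewrite -subr_eq0 in fxy; rewrite -(eqP fxy); ring.
  by move/eqP; rewrite mulf_eq0 (negbTE (two_neq0 oddF)) => /eqP.
have ux : inner_poly x = b * (y - x).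
  by rewrite -[LHS]subr0 -root_xy /inner_poly /linear_part; ring.
have uy : inner_poly y = a * (y - x) ^+ N.
  by rewrite exprN_sub -[LHS]subr0 -root_xy /inner_poly /linear_part; ring.
have yx0 : y - x != 0.
  apply/eqP => yx; move/eqP: chiy; rewrite uy yx exprN_odd mul0r mulr0.
  by rewrite expr0n eqn0Ngt half_card_gt0 // eq_sym oppr_eq0 oner_eq0.
have ux0 : inner_poly x != 0 by rewrite ux mulf_neq0.
have chix1 : inner_poly x ^+ h = 1.
  by case: (expr_half_card_sign oddF ux0) chix => ->; rewrite ?eqxx.
have prod_xy : inner_poly x * inner_poly y = a * b * ((y - x) ^+ N./2.+1) ^+ 2.
  by rewrite ux uy exprN_odd [(y - x) ^+ N./2.+1]exprS; ring.
have chi_prod : (inner_poly x * inner_poly y) ^+ h = (a * b) ^+ h.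
  by rewrite prod_xy exprMn expr_half_card_sqr ?expf_neq0 // mulr1.
by rewrite -chi_prod exprMn chix1 chiy mul1r.
Qed.

Lemma fpolyN_inj_D0 : a * b \in D0 F -> injective fpolyN.
Proof.
move=> /(expr_half_card_D0 oddF) chi_ab x y.
have mixed_absurd u v : inner_poly u ^+ h != -1 -> inner_poly v ^+ h = -1 -> fpolyN u != fpolyN v.
  move=> chiu chiv; apply/eqP => /(fpolyN_mixed_collision chiu chiv).
  by rewrite chi_ab; apply/eqP/oner_neqN1.
have two_a0 : 2 * a != 0 by rewrite mulf_neq0 ?two_neq0.
have two_b0 : 2 * b != 0 by rewrite mulf_neq0 ?two_neq0.
have [chix|chix] := eqVneq (inner_poly x ^+ h) (-1);
  have [chiy|chiy] := eqVneq (inner_poly y ^+ h) (-1) => fxy.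
- by move: fxy; rewrite !fpolyN_branch chix chiy eqxx => /addIr/(mulfI two_b0).
- by have := mixed_absurd y x chiy chix; rewrite fxy eqxx.
- by have := mixed_absurd x y chix chiy; rewrite fxy eqxx.
- move: fxy; rewrite !fpolyN_branch (negbTE chix) (negbTE chiy) => /addIr/(mulfI two_a0).
  exact: exprN_inj.
Qed.

Lemma linear_part_inj : a * b \notin D0 F -> injective linear_part.
Proof.
move=> abD0 x y Mxy; apply/eqP; apply: contraNT abD0 => xy.
have z0 : x - y != 0 by rewrite subr_eq0.
have lin_diff : linear_part x - linear_part y = a * (x - y) ^+ N - b * (x - y).
  by rewrite /linear_part exprN_sub; ring.
have : (a * b - (a * (x - y) ^+ N./2) ^+ 2) * (x - y) = - a * (linear_part x - linear_part y).
  by rewrite lin_diff exprN_odd; ring.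
rewrite Mxy subrr mulr0 => /eqP; rewrite mulf_eq0 (negbTE z0) orbF subr_eq0 => /eqP ->.
rewrite inE; apply/existsP; exists (a * (x - y) ^+ N./2).
by rewrite eqxx andbT mulf_neq0 ?expf_neq0.
Qed.

Lemma fpolyN_collision_notD0 : a * b \notin D0 F -> exists x, fpolyN x = fpolyN (x + b).
Proof.
move=> abD0; have [M_inv _ M_invK] := injF_bij (linear_part_inj abD0).
pose x := M_inv (b * b - delta); exists x.
have Mx : linear_part x = b * b - delta by rewrite /x M_invK.
have ux : inner_poly x = b ^+ 2 by rewrite /inner_poly Mx subrK.
have uxb : inner_poly (x + b) = a * b ^+ N.
  rewrite /inner_poly /linear_part exprDn_pchar //.
  transitivity (linear_part x + delta + a * b ^+ N - b * b); first by rewrite /linear_part; ring.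
  by rewrite Mx; ring.
have chix : inner_poly x ^+ h != -1.
  by rewrite ux expr_half_card_sqr // oner_neqN1.
have chixb : inner_poly (x + b) ^+ h = -1.
  rewrite uxb exprN_odd mulrA exprMn expr_half_card_sqr ?expf_neq0 // mulr1.
  by rewrite expr_half_card_notD0 // mulf_neq0.
rewrite !fpolyN_branch chixb eqxx (negbTE chix).
transitivity (2 * (linear_part x + delta - b * b) + 2 * b * (x + b) - delta).
  by rewrite /linear_part; ring.
by rewrite Mx; ring.
Qed.

Lemma bijective_fpolyN : bijective fpolyN <-> a * b \in D0 F.
Proof.
split=> [fpolyN_bij | /fpolyN_inj_D0/injF_bij //].
apply/negPn/negP => /fpolyN_collision_notD0[x fx].
have /eqP := bij_inj fpolyN_bij fx.
by rewrite -subr_eq0 opprD addrA subrr sub0r oppr_eq0 (negbTE b0).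
Qed.

End PermutationCriterion.

Theorem mainTheorem11 (F : finFieldType) (q n k : nat)
  (hq : prime_power q) (hodd : odd q) (hn : (0 < n)%N) (hk : (0 < k)%N)
  (hF : #|F| = (q ^ n)%N) (a b delta : F) (hab : a * b != 0) :
  is_perm_fun (fpoly q n k a b delta) <-> a * b \in D0 F.
Proof.
have [p [m [pp m0 qE]]] := hq.
have pF : p \in [pchar F] by apply: (@card_finPcharP _ _ (m * n)); rewrite // hF qE expnM.
have oddF : odd #|F| by rewrite hF oddX hodd orbT.
have pcharN : [pchar F].-nat (q ^ k)%N.
  by rewrite (eq_pnat _ (pcharf_eq pF)) qE -expnM pnatX pnat_id.
have oddN : odd (q ^ k)%N by rewrite oddX hodd orbT.
have /andP[a0 b0] : (a != 0) && (b != 0) by rewrite -negb_or -mulf_eq0.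
have half_exp : ((q ^ n + 1) %/ 2 = (#|F|./2).+1)%N.
  by rewrite -hF {1}(card_odd_half oddF) addn1 -doubleS -muln2 mulnK.
have fpolyE : fpoly q n k a b delta =1 fpolyN (q ^ k)%N a b delta.
  by move=> x; rewrite /fpoly half_exp.
rewrite -(bijective_fpolyN delta oddF pcharN oddN a0 b0).
by split=> /eq_bij; apply=> x; rewrite fpolyE.
Qed.
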